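(* Let $\Pi$ be a $3$-decomposable $30$-half-period with classes $A,B,C$. Then $N_{15}^{bi}(\Pi)=15$.
   Context: An allowable sequence on an $n$-element set is a doubly infinite sequence of permutations of the set (lists on positions $1,\dots,n$) in which consecutive permutations differ by swapping two adjacent elements (a transposition) and $\pi_{i+\binom n2}$ is the reverse of $\pi_i$; an $n$-half-period is a block $(\pi_0,\dots,\pi_{\binom n2})$ of consecutive permutations (each pair of elements is swapped exactly once in it). A transposition swapping the elements in positions $i,i+1$ is an $i$-transposition; for $1\le k\le n/2$ it is $k$-critical if it is a $k$-transposition or an $(n-k)$-transposition (for $n=30$, the $15$-critical transpositions are the $15$-transpositions). An $n$-half-period $\Pi$ ($3\mid n$) is $3$-decomposable if its elements can be labeled $A=\{a_1,\dots,a_{n/3}\}$, $B=\{b_1,\dots,b_{n/3}\}$, $C=\{c_1,\dots,c_{n/3}\}$ so that its first permutation is $(a_{n/3},\dots,a_1,b_1,\dots,b_{n/3},c_1,\dots,c_{n/3})$, every transposition between an element of $A$ and an element of $B$ occurs before every transposition between an element of $C$ and an element of $A\cup B$, and every transposition between $A$ and $C$ occurs before every transposition between $B$ and $C$. A transposition is bichromatic if its two elements lie in different classes among $A,B,C$. $N_k^{bi}(\Pi)$ is the number of bichromatic $k$-critical transpositions of $\Pi$. *)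

From mathcomp Require Import all_boot all_order all_algebra all_fingroup.
Set Implicit Arguments. Unset Strict Implicit. Unset Printing Implicit Defensive.

(* A permutation (list on positions)
   is pi : {perm 'I_n}, with pi p = element at (0-based) position p.
   Positions are 0-based here: the paper's i-transposition (swapping the
   1-based positions i, i+1) swaps 0-based positions j = i-1 and j+1. *)

Definition adj_swap (n : nat) (pi pi' : {perm 'I_n}) (j : nat) : bool :=
  (j.+1 < n) &&
  [forall p : 'I_n, [forall q : 'I_n,
     ((val p == j) && (val q == j.+1)) ==> ((pi' p == pi q) && (pi' q == pi p))]] &&
  [forall p : 'I_n, ((val p != j) && (val p != j.+1)) ==> (pi' p == pi p)].

Definition allowable (n : nat) (f : int -> {perm 'I_n}) : Prop :=
  (forall t : int, exists j : nat, adj_swap (f t) (f (t + 1)%R) j) /\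
  (forall (t : int) (p : 'I_n), f (t + ('C(n, 2) : int))%R p = f t (rev_ord p)).

Definition half_period (n : nat) (Pi : nat -> {perm 'I_n}) : Prop :=
  exists f : int -> {perm 'I_n}, allowable f /\
  exists t0 : int, forall k : nat, k <= 'C(n, 2) -> Pi k = f (t0 + (k : int))%R.

Definition swaps (n : nat) (Pi : nat -> {perm 'I_n}) (s : nat) (x y : 'I_n) : Prop :=
  exists p q : 'I_n, val q = (val p).+1 /\ adj_swap (Pi s) (Pi s.+1) (val p) /\
    Pi s p = x /\ Pi s q = y.

Definition swaps_between (n : nat) (Pi : nat -> {perm 'I_n}) (s : nat)
    (X Y : {set 'I_n}) : Prop :=
  exists x y : 'I_n, swaps Pi s x y /\
    ((x \in X /\ y \in Y) \/ (x \in Y /\ y \in X)).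

(* 3-decomposability with classes A, B, C (labels 0-based: a_(i+1) = a i) *)
Definition three_decomposable (n : nat) (Pi : nat -> {perm 'I_n})
    (A B C : {set 'I_n}) : Prop :=
  half_period Pi /\ (3 %| n) /\
  let m := n %/ 3 in
  exists a b c : nat -> 'I_n,
    A = [set a (val i) | i : 'I_m] /\
    B = [set b (val i) | i : 'I_m] /\
    C = [set c (val i) | i : 'I_m] /\
    (forall p : 'I_n,
       Pi 0 p = (if val p < m then a (m - (val p).+1)
                 else if val p < 2 * m then b (val p - m)
                 else c (val p - 2 * m))) /\
    (forall s s' : nat, s < 'C(n, 2) -> s' < 'C(n, 2) ->
       swaps_between Pi s A B -> swaps_between Pi s' C (A :|: B) -> s < s') /\
    (forall s s' : nat, s < 'C(n, 2) -> s' < 'C(n, 2) ->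
       swaps_between Pi s A C -> swaps_between Pi s' B C -> s < s').

Definition bichromatic (n : nat) (A B C : {set 'I_n}) (x y : 'I_n) : bool :=
  ~~ [|| (x \in A) && (y \in A), (x \in B) && (y \in B) | (x \in C) && (y \in C)].

(* a swap at 0-based lower position j is an i-transposition with i = j+1;
   it is k-critical iff i = k or i = n - k *)
Definition critical (n k j : nat) : bool := (j.+1 == k) || (j.+1 == n - k).

Definition N_bi (n k : nat) (Pi : nat -> {perm 'I_n}) (A B C : {set 'I_n}) : nat :=
  #|[set s : 'I_('C(n, 2)) |
      [exists p : 'I_n, [exists q : 'I_n,
         [&& val q == (val p).+1, adj_swap (Pi s) (Pi s.+1) (val p),
             critical n k (val p) & bichromatic A B C (Pi s p) (Pi s q)]]]]|.

From mathcomp Require Import all_boot all_order all_algebra all_fingroup.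
From mathcomp Require Import zify.
Set Implicit Arguments. Unset Strict Implicit. Unset Printing Implicit Defensive.
Import GRing.Theory.

(* Since Pi 'C(n, 2) reverses Pi 0,
   and each step can put at most one more pair out of its initial order, every
   transposition of a half-period swaps a pair that is still in initial order,
   and every pair is swapped exactly once.  A 15-critical transposition crosses
   the cut after position 15, moving its lower element to the right half and its
   upper element to the left half.  The A-elements in the left half go from 10
   to 5 by the first transposition between C and A ∪ B, when B has overtaken all
   of A but C has not moved yet; hence there are exactly 5 critical AB-swaps.
   The C-elements in the left half go from 0 to 10 over the half-period, which
   accounts for 10 critical AC- and BC-swaps. *)

Section OrdinalCounting.
Variable m : nat.

Lemma card_ord_ltn (i : 'I_m) : #|[set p : 'I_m | p < i]| = i.
Proof.
rewrite -sum1dep_card (big_ord_narrow (ltnW (ltn_ord i))).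
by rewrite sum_nat_const card_ord muln1.
Qed.

Lemma card_ordered_pairs : #|[set pq : 'I_m * 'I_m | pq.1 < pq.2]| = 'C(m, 2).
Proof.
rewrite -sum1dep_card big_mkcond.
rewrite -(pair_bigA _ (fun p q : 'I_m => if p < q then 1 else 0)) /=.
rewrite exchange_big -bin2_sum big_mkord; apply: eq_bigr => q _.
by rewrite -big_mkcond /= sum1dep_card card_ord_ltn.
Qed.

Lemma perm_prefix_block (sigma : {perm 'I_m}) (X : {set 'I_m}) :
  (forall x y, x \in X -> y \notin X -> sigma x < sigma y) ->
  forall x, (sigma x < #|X|) = (x \in X).
Proof.
move=> X_first x; have rank_x : #|[set y | sigma y < sigma x]| = sigma x.
  rewrite -[RHS]card_ord_ltn -[RHS](card_preimset _ (@perm_inj _ sigma)).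
  by apply: eq_card => y; rewrite !inE.
apply/idP/idP => [|xX].
  apply: contraLR => xNX; rewrite -leqNgt -rank_x subset_leq_card //.
  by apply/subsetP => y yX; rewrite inE X_first.
have : [set y | sigma y < sigma x] \subset X :\ x.
  apply/subsetP => y; rewrite !inE => lt_yx; apply/andP; split.
    by apply: contraTneq lt_yx => ->; rewrite ltnn.
  by apply: contraLR lt_yx => yNX; rewrite -leqNgt ltnW ?X_first.
by move/subset_leq_card; rewrite rank_x [#|X|](cardsD1 x) xX.
Qed.

Lemma sum_mem_andb_pred1 (T : finType) (X : {set T}) (b : bool) (a : T) :
  \sum_(x in X) (b && (x == a)) = b && (a \in X).
Proof.
rewrite big_mkcond (bigD1 a) //= eqxx andbT big1 ?addn0 => [|x /negbTE->].
  by case: (a \in X); case: b.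
by rewrite andbF if_same.
Qed.

Lemma mem_imset_block (sigma : {perm 'I_m}) k (f : nat -> 'I_m) (Q : pred nat)
    (idx : nat -> nat) x :
  (forall p : 'I_m, Q p -> idx p < k /\ sigma p = f (idx p)) ->
  (forall i : 'I_k, exists2 p : 'I_m, Q p & idx p = i) ->
  (x \in [set f (val i) | i : 'I_k]) = Q (sigma^-1%g x).
Proof.
move=> block onto; apply/imsetP/idP => [[i _ -> /=] | Qx].
  by have [p Qp <-] := onto i; have [_ <-] := block p Qp; rewrite permK.
have [lt_k fx] := block _ Qx; exists (Ordinal lt_k) => //=.
by rewrite -fx permKV.
Qed.

End OrdinalCounting.

Section AdjacentTransposition.
Variable n : nat.
Implicit Types (pi : {perm 'I_n.+1}) (i j : 'I_n.+1).

Definition tpermS j : {perm 'I_n.+1} := tperm j (inord j.+1).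

Lemma inordS_val j : j < n -> (inord j.+1 : 'I_n.+1) = j.+1 :> nat.
Proof. by move=> lt_jn; rewrite inordK. Qed.

Lemma adj_swap_tpermS pi j : j < n -> adj_swap pi (tpermS j * pi)%g j.
Proof.
move=> lt_jn; have jS := inordS_val lt_jn.
apply/andP; split; first (apply/andP; split).
- by rewrite ltnS.
- apply/forallP => p; apply/forallP => q; apply/implyP => /andP [/eqP pj /eqP qj].
  have -> : p = j by apply: val_inj.
  have -> : q = inord j.+1 by apply: val_inj; rewrite /= jS.
  by rewrite !permM tpermL tpermR !eqxx.
- apply/forallP => p; apply/implyP => /andP [pj pjS].
  rewrite permM tpermD //.
  + by apply: contra pj => /eqP <-.
  + by apply: contra pjS => /eqP <-; rewrite /= jS.
Qed.

Lemma adj_swapP pi pi' (k : nat) : adj_swap pi pi' k ->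
  exists2 j : 'I_n.+1, (j = k :> nat) /\ j < n & pi' = (tpermS j * pi)%g.
Proof.
move=> /andP [/andP [lt_kn /forallP swap] /forallP fix_other].
have lt_k : k < n.+1 by rewrite ltnW.
pose j := Ordinal lt_k; have jS : (inord j.+1 : 'I_n.+1) = j.+1 :> nat by rewrite inordK.
exists j => //; apply/permP => p; rewrite permM.
have /andP [/eqP pj /eqP pjS] : (pi' j == pi (inord j.+1)) && (pi' (inord j.+1) == pi j).
  by apply: (implyP (forallP (swap j) (inord j.+1))); rewrite /= jS !eqxx.
case: tpermP => [->|->|/eqP p_j /eqP p_jS] //.
apply/eqP/(implyP (fix_other p)); apply/andP; split.
- by apply: contra p_j => /eqP pk; apply/eqP/val_inj.
- by apply: contra p_jS => /eqP pk; apply/eqP/val_inj; rewrite /= jS.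
Qed.

Lemma tpermS_inj i j : i < n -> j < n -> tpermS i = tpermS j -> i = j.
Proof.
move=> lt_in lt_jn /(congr1 (fun s : {perm _} => s i)); rewrite /tpermS tpermL.
have iS := inordS_val lt_in; have jS := inordS_val lt_jn.
case: tpermP => [<-//|/(congr1 val) /= ij /(congr1 val)|_ _ /(congr1 val)] /=.
- by rewrite iS jS in ij *; lia.
- by rewrite iS; lia.
Qed.

Lemma tpermS_val j p : j < n ->
  tpermS j p = (if p == j :> nat then j.+1 else if p == j.+1 :> nat then j else p) :> nat.
Proof.
move=> lt_jn; have jS := inordS_val lt_jn; rewrite /tpermS.
case: tpermP => [->|->|/eqP p_j /eqP p_jS]; rewrite /= ?jS ?eqxx //.
  by case: eqP => //; lia.
by rewrite -!val_eqE /= jS in p_j p_jS; rewrite (negbTE p_j) (negbTE p_jS).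
Qed.

Lemma ltn_tpermS j p q : j < n ->
  (p, q) != (j, inord j.+1) -> (q, p) != (j, inord j.+1) ->
  (tpermS j p < tpermS j q) = (p < q).
Proof.
move=> lt_jn; have jS := inordS_val lt_jn.
rewrite !xpair_eqE -!val_eqE /= jS !tpermS_val //.
by do ![case: eqP => ? /=]; lia.
Qed.

End AdjacentTransposition.

Lemma half_period_adj_swap n (Pi : nat -> {perm 'I_n}) s :
  half_period Pi -> s < 'C(n, 2) -> exists j, adj_swap (Pi s) (Pi s.+1) j.
Proof.
move=> [f [[f_adj _] [t0 Pi_f]]] lt_sN.
rewrite Pi_f ?(ltnW lt_sN) // Pi_f // -addn1 PoszD addrA.
exact: f_adj.
Qed.

Lemma half_period_rev n (Pi : nat -> {perm 'I_n}) p :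
  half_period Pi -> Pi 'C(n, 2) p = Pi 0 (rev_ord p).
Proof. by move=> [f [[_ f_rev] [t0 Pi_f]]]; rewrite !Pi_f // addr0 f_rev. Qed.

Section HalfPeriod.
Variables (n : nat) (Pi : nat -> {perm 'I_n.+1}).
Local Notation N := 'C(n.+1, 2).
Hypothesis Pi_half : half_period Pi.

Let Pi_adj s : s < N -> exists j, adj_swap (Pi s) (Pi s.+1) j.
Proof. exact: half_period_adj_swap. Qed.

Let Pi_rev p : Pi N p = Pi 0 (rev_ord p).
Proof. exact: half_period_rev. Qed.

(* The default ord0 is never used: see swap_posP. *)
Definition swap_pos s : 'I_n.+1 :=
  odflt ord0 [pick j : 'I_n.+1 | adj_swap (Pi s) (Pi s.+1) j].

Definition pos t : {perm 'I_n.+1} := (Pi t)^-1%g.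

Definition swap_lo s := Pi s (swap_pos s).
Definition swap_hi s := Pi s (inord (swap_pos s).+1).

Lemma swap_posP s : s < N ->
  swap_pos s < n /\ Pi s.+1 = (tpermS (swap_pos s) * Pi s)%g.
Proof.
move=> lt_sN; rewrite /swap_pos; case: pickP => [j /adj_swapP [j' [/val_inj -> //]]|].
have [k /adj_swapP [j [_ lt_jn] Pi_step] /(_ j)] := Pi_adj lt_sN.
by rewrite Pi_step adj_swap_tpermS.
Qed.

Lemma swap_pos_lt s : s < N -> swap_pos s < n.
Proof. by case/swap_posP. Qed.

Lemma pos_swap_pos s : s < N -> pos s.+1 =1 tpermS (swap_pos s) \o pos s.
Proof. by move=> /swap_posP [_ Pi_step] x; rewrite /pos Pi_step invMg permM tpermV. Qed.

Lemma pos_swap_lo s : pos s (swap_lo s) = swap_pos s.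
Proof. exact: permK. Qed.

Lemma pos_swap_hi s : pos s (swap_hi s) = inord (swap_pos s).+1.
Proof. exact: permK. Qed.

Lemma pos_swap_lo_next s : s < N -> pos s.+1 (swap_lo s) = inord (swap_pos s).+1.
Proof. by move=> lt_sN; rewrite pos_swap_pos //= pos_swap_lo tpermL. Qed.

Lemma pos_swap_hi_next s : s < N -> pos s.+1 (swap_hi s) = swap_pos s.
Proof. by move=> lt_sN; rewrite pos_swap_pos //= pos_swap_hi tpermR. Qed.

Lemma swap_hi_val s : s < N -> (inord (swap_pos s).+1 : 'I_n.+1) = (swap_pos s).+1 :> nat.
Proof. by move/swap_pos_lt/inordS_val. Qed.

Lemma pos_swap_other s x : s < N -> x != swap_lo s -> x != swap_hi s ->
  pos s.+1 x = pos s x.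
Proof.
move=> lt_sN x_lo x_hi; rewrite pos_swap_pos //= /tpermS tpermD //.
- by apply: contra x_lo => /eqP e; rewrite /swap_lo e permKV.
- by apply: contra x_hi => /eqP e; rewrite /swap_hi e permKV.
Qed.

Lemma ltn_pos_swap s x y : s < N ->
  (x, y) != (swap_lo s, swap_hi s) -> (y, x) != (swap_lo s, swap_hi s) ->
  (pos s.+1 x < pos s.+1 y) = (pos s x < pos s y).
Proof.
move=> lt_sN xy_swap yx_swap; rewrite !pos_swap_pos //=.
apply: ltn_tpermS (swap_pos_lt lt_sN) _ _;
  by rewrite -pos_swap_hi -pos_swap_lo xpair_eqE !(inj_eq perm_inj) -xpair_eqE.
Qed.

Lemma adj_swap_pos s (k : nat) : s < N -> adj_swap (Pi s) (Pi s.+1) k = (k == swap_pos s).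
Proof.
move=> lt_sN; have [lt_jn Pi_step] := swap_posP lt_sN.
apply/idP/eqP => [/adj_swapP [j [<- lt_jn'] Pi_step'] | ->].
  congr val; apply: tpermS_inj => //.
  by apply: (mulIg (Pi s)); rewrite -Pi_step -Pi_step'.
by rewrite Pi_step adj_swap_tpermS.
Qed.

Lemma pos_rev x : pos N x = rev_ord (pos 0 x).
Proof. by apply: (@perm_inj _ (Pi N)); rewrite [RHS]Pi_rev rev_ordK !permKV. Qed.

Definition inversions t : {set 'I_n.+1 * 'I_n.+1} :=
  [set xy | (pos 0 xy.1 < pos 0 xy.2) && (pos t xy.2 < pos t xy.1)].

Lemma inversions0 : inversions 0 = set0.
Proof. by apply/setP => -[x y]; rewrite !inE; case: ltngtP. Qed.

Lemma card_inversionsN : #|inversions N| = N.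
Proof.
pose pos0_pair (xy : 'I_n.+1 * 'I_n.+1) := (pos 0 xy.1, pos 0 xy.2).
have pos0_pair_inj : injective pos0_pair.
  by move=> [x y] [x' y'] [/perm_inj -> /perm_inj ->].
rewrite -[RHS]card_ordered_pairs -[RHS](card_preimset _ pos0_pair_inj).
apply: eq_card => -[x y]; rewrite !inE /= !pos_rev /=.
by have := ltn_ord (pos 0 x); have := ltn_ord (pos 0 y); lia.
Qed.

Lemma inversions_step s : s < N ->
  inversions s.+1 \subset (swap_lo s, swap_hi s) |: inversions s.
Proof.
move=> lt_sN; apply/subsetP => -[x y]; rewrite !inE.
have [//|xy_swap] := eqVneq (x, y) (swap_lo s, swap_hi s).
have [[-> ->]|yx_swap] := eqVneq (y, x) (swap_lo s, swap_hi s).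
  by rewrite /= pos_swap_lo_next // pos_swap_hi_next // swap_hi_val // => /andP [_]; lia.
by rewrite /= ltn_pos_swap.
Qed.

Lemma inversions_step_back s : s < N -> pos 0 (swap_hi s) < pos 0 (swap_lo s) ->
  (swap_hi s, swap_lo s) \in inversions s /\
  inversions s.+1 \subset inversions s :\ (swap_hi s, swap_lo s).
Proof.
move=> lt_sN back; split.
  by rewrite inE /= back pos_swap_lo pos_swap_hi swap_hi_val // ltnSn.
apply/subsetP => -[x y]; rewrite !inE.
have [[-> ->]|yx_swap] := eqVneq (y, x) (swap_lo s, swap_hi s).
  by rewrite /= pos_swap_lo_next // pos_swap_hi_next // swap_hi_val // => /andP [_]; lia.
have [[-> ->]|xy_swap] := eqVneq (x, y) (swap_lo s, swap_hi s).
  by rewrite ltnNge (ltnW back).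
have xy_back : (x, y) != (swap_hi s, swap_lo s) by rewrite xpair_eqE andbC -xpair_eqE.
by rewrite /= xy_back ltn_pos_swap.
Qed.

Lemma card_inversions_shift u d : u + d <= N ->
  #|inversions (u + d)| <= #|inversions u| + d.
Proof.
elim: d => [|d IHd] le_N; first by rewrite !addn0.
rewrite addnS in le_N *; have := IHd (ltnW le_N).
have := subset_leq_card (inversions_step le_N); rewrite cardsU1; lia.
Qed.

Lemma card_inversions_le t : t <= N -> #|inversions t| <= t.
Proof.
by move=> le_tN; have := @card_inversions_shift 0 t le_tN; rewrite inversions0 cards0.
Qed.

(* Otherwise the number of inversions drops at step s, and then it cannot reach N
   by the end of the half-period. *)
Lemma swap_lo_before_hi s : s < N -> pos 0 (swap_lo s) < pos 0 (swap_hi s).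
Proof.
move=> lt_sN; case: ltngtP => // [back | /val_inj/perm_inj same].
  have [hi_lo_inv step_back] := inversions_step_back lt_sN back.
  have lt_inv : #|inversions s.+1| < #|inversions s|.
    rewrite [#|inversions s|](cardsD1 (swap_hi s, swap_lo s)) hi_lo_inv ltnS.
    exact: subset_leq_card.
  have := card_inversions_le (ltnW lt_sN).
  have := @card_inversions_shift s.+1 (N - s.+1); rewrite subnKC // card_inversionsN.
  move=> /(_ (leqnn N)); lia.
have := congr1 (val \o pos s) same; rewrite /= pos_swap_lo pos_swap_hi swap_hi_val //; lia.
Qed.

Lemma pos_inverted x y t : pos 0 x < pos 0 y -> t <= N ->
  pos t y < pos t x <-> exists2 s, s < t & (swap_lo s, swap_hi s) = (x, y).
Proof.
move=> lt_xy; elim: t => [|t IHt] lt_tN; first by split => [|[]]; lia.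
have [[-> ->] | xy_other] := eqVneq (x, y) (swap_lo t, swap_hi t).
  rewrite pos_swap_lo_next // pos_swap_hi_next // swap_hi_val // ltnSn.
  by split => // _; exists t.
have [yx_swap | yx_other] := eqVneq (y, x) (swap_lo t, swap_hi t).
  by case: yx_swap lt_xy => -> ->; rewrite ltnNge ltnW // swap_lo_before_hi.
rewrite ltn_pos_swap // IHt ?(ltnW lt_tN) //.
split=> [[s lt_st swap_s] | [s]]; first by exists s => //; apply: ltnW.
rewrite ltnS leq_eqVlt => /orP [/eqP -> swap_t | lt_st swap_s]; last by exists s.
by rewrite swap_t eqxx in xy_other.
Qed.

Lemma exists_swap x y : pos 0 x < pos 0 y ->
  exists2 s, s < N & (swap_lo s, swap_hi s) = (x, y).
Proof.
move=> lt_xy; apply/(pos_inverted lt_xy (leqnn N)); rewrite !pos_rev /=.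
by have := ltn_ord (pos 0 x); have := ltn_ord (pos 0 y); lia.
Qed.

Definition left_count (X : {set 'I_n.+1}) k t := \sum_(x in X) (pos t x < k).

(* The swap of the 0-based positions j, j + 1 crosses the cut after the first k
   positions iff j + 1 = k, i.e. iff it is the paper's k-transposition. *)
Definition crosses k s := (swap_pos s).+1 == k.

Lemma sum_pos t (F : nat -> nat) :
  \sum_(x : 'I_n.+1) F (pos t x) = \sum_(0 <= p < n.+1) F p.
Proof. by rewrite big_mkord [RHS](reindex_inj (@perm_inj _ (pos t))). Qed.

Lemma card_pos (X : {set 'I_n.+1}) t (Q : pred nat) :
  (forall x, (x \in X) = Q (pos t x)) -> #|X| = \sum_(0 <= p < n.+1) Q p.
Proof.
move=> memX; rewrite -sum1_card big_mkcond -(sum_pos t (fun p => Q p : nat)).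
by apply: eq_bigr => x _; rewrite memX; case: (Q _).
Qed.

Lemma left_count_pos (X : {set 'I_n.+1}) k t (Q : pred nat) :
  (forall x, (x \in X) = Q (pos t x)) ->
  left_count X k t = \sum_(0 <= p < n.+1) (Q p && (p < k)).
Proof.
move=> memX; rewrite -(sum_pos t (fun p => Q p && (p < k) : nat)) /left_count big_mkcond.
by apply: eq_bigr => x _; rewrite memX; case: (Q _).
Qed.

Lemma left_count_step X k s : s < N ->
  left_count X k s.+1 + (crosses k s && (swap_lo s \in X)) =
  left_count X k s + (crosses k s && (swap_hi s \in X)).
Proof.
move=> lt_sN; rewrite /left_count -!sum_mem_andb_pred1 -!big_split /=.
apply: eq_bigr => x _; rewrite /crosses.
have lo_hi : swap_lo s != swap_hi s.
  by apply: contraTneq (swap_lo_before_hi lt_sN) => ->; rewrite ltnn.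
have [-> | x_lo] := eqVneq x (swap_lo s).
  by rewrite (negbTE lo_hi) pos_swap_lo_next // pos_swap_lo swap_hi_val //; lia.
have [-> | x_hi] := eqVneq x (swap_hi s).
  by rewrite pos_swap_hi_next // pos_swap_hi swap_hi_val //; lia.
by rewrite pos_swap_other // (negbTE x_lo) (negbTE x_hi) !andbF.
Qed.

Lemma left_count_telescope X k t : t <= N ->
  left_count X k 0 + \sum_(0 <= s < t) (crosses k s && (swap_hi s \in X)) =
  left_count X k t + \sum_(0 <= s < t) (crosses k s && (swap_lo s \in X)).
Proof.
elim: t => [|t IHt] lt_tN; first by rewrite !big_geq.
rewrite !big_nat_recr //= addnA IHt ?(ltnW lt_tN) // addnAC -left_count_step //.
by rewrite addnAC addnA.
Qed.

Lemma N_biE k A B C : N_bi k Pi A B C = \sum_(s < N)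
  (critical n.+1 k (swap_pos s) && bichromatic A B C (swap_lo s) (swap_hi s)).
Proof.
rewrite /N_bi -sum1dep_card big_mkcond; apply: eq_bigr => s _.
have lt_sN := ltn_ord s.
set P := [exists p, _]; suff -> : P = critical n.+1 k (swap_pos s) &&
    bichromatic A B C (swap_lo s) (swap_hi s) by case: (_ && _).
apply/existsP/andP => [[p /existsP [q /and4P [/eqP qS adj crit bichr]]] | [crit bichr]].
  move: adj; rewrite adj_swap_pos // => /eqP/val_inj p_pos.
  have q_hi : q = inord (swap_pos s).+1 by apply: val_inj; rewrite /= qS p_pos swap_hi_val.
  by move: crit bichr; rewrite /swap_lo /swap_hi -q_hi -p_pos.
exists (swap_pos s); apply/existsP; exists (inord (swap_pos s).+1).
by rewrite /= swap_hi_val // eqxx adj_swap_pos // eqxx crit bichr.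
Qed.

Lemma swaps_swap_lo_hi s : s < N -> swaps Pi s (swap_lo s) (swap_hi s).
Proof.
move=> lt_sN; exists (swap_pos s), (inord (swap_pos s).+1).
by rewrite /= swap_hi_val // adj_swap_pos.
Qed.

End HalfPeriod.

Section ThreeDecomposable30.
Variables (Pi : nat -> {perm 'I_30}) (A B C : {set 'I_30}).
Hypothesis Pi_decomp : three_decomposable Pi A B C.
Local Notation N := 'C(30, 2).
Local Notation pos := (pos Pi).

Let Pi_half : half_period Pi.
Proof. by case: Pi_decomp. Qed.

Lemma decomp_classes :
  [/\ forall x, (x \in A) = (pos 0 x < 10),
      forall x, (x \in B) = (10 <= pos 0 x < 20)
    & forall x, (x \in C) = (20 <= pos 0 x)].
Proof.
case: Pi_decomp => _ [_ [a [b [c [-> [-> [-> [Pi0 _]]]]]]]].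
have m10 : 30 %/ 3 = 10 by [].
split=> x.
- apply: (mem_imset_block (Q := fun p => p < 10) (idx := fun p => 9 - p)) => [p /= lt_p10|i].
    by rewrite Pi0 m10 lt_p10; split; [lia | congr a; lia].
  exists (inord (9 - i)); rewrite /= inordK; have := ltn_ord i; lia.
- apply: (mem_imset_block (Q := fun p => 10 <= p < 20) (idx := fun p => p - 10))
    => [p /= /andP [ge_p10 lt_p20]|i].
    by rewrite Pi0 m10 (ltnNge p 10) ge_p10 lt_p20; split; [lia | congr b].
  exists (inord (10 + i)); rewrite /= inordK; have := ltn_ord i; lia.
- apply: (mem_imset_block (Q := fun p => 20 <= p) (idx := fun p => p - 20)) => [p /= ge_p20|i].
    rewrite Pi0 m10 (ltnNge p 10) (ltnNge p (2 * 10)) (leq_trans _ ge_p20) // ge_p20.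
    split; last by [].
    by have := ltn_ord p; lia.
  exists (inord (20 + i)); rewrite /= inordK; have := ltn_ord i; lia.
Qed.

Let memA x : (x \in A) = (pos 0 x < 10). Proof. by case: decomp_classes. Qed.
Let memB x : (x \in B) = (10 <= pos 0 x < 20). Proof. by case: decomp_classes. Qed.
Let memC x : (x \in C) = (20 <= pos 0 x). Proof. by case: decomp_classes. Qed.

Definition mid_swaps (X Y : {set 'I_30}) := \sum_(0 <= s < N)
  [&& crosses Pi 15 s, swap_lo Pi s \in X & swap_hi Pi s \in Y].

Lemma N_bi_classes : N_bi 15 Pi A B C = mid_swaps A B + mid_swaps A C + mid_swaps B C.
Proof.
rewrite N_biE // -(big_mkord xpredT (fun s => critical 30 15 (swap_pos Pi s) &&
  bichromatic A B C (swap_lo Pi s) (swap_hi Pi s) : nat)).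
rewrite -!big_split; apply: eq_big_nat => s /andP [_ lt_sN].
have := swap_lo_before_hi Pi_half lt_sN.
rewrite /critical /crosses /bichromatic !memA !memB !memC orbb.
by case: (_ == 15) => /=; lia.
Qed.

Lemma first_mixed_swap : exists2 ts, ts < N &
  [/\ swap_lo Pi ts \in A :|: B, swap_hi Pi ts \in C &
      forall s, s < ts -> ~~ ((swap_lo Pi s \in A :|: B) && (swap_hi Pi s \in C))].
Proof.
pose mixed s := [&& s < N, swap_lo Pi s \in A :|: B & swap_hi Pi s \in C].
have [|ts /and3P [lt_tsN ts_lo ts_hi] ts_first] := ex_minnP (P := mixed).
  have lt_first_last : pos 0 (Pi 0 ord0) < pos 0 (Pi 0 ord_max) by rewrite /pos !permK.
  have [s lt_sN [lo_s hi_s]] := exists_swap Pi_half lt_first_last.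
  by exists s; rewrite /mixed lt_sN lo_s hi_s in_setU memA memC /pos !permK.
exists ts => //; split=> // s lt_sts; apply/negP => /andP [lo_s hi_s].
have : ts <= s by apply: ts_first; rewrite /mixed lo_s hi_s andbT (ltn_trans lt_sts).
by rewrite leqNgt lt_sts.
Qed.

Let AB_before_mixed s s' : s < N -> s' < N ->
  swaps_between Pi s A B -> swaps_between Pi s' C (A :|: B) -> s < s'.
Proof. by case: Pi_decomp => _ [_ [a [b [c [_ [_ [_ [_ [AB_C _]]]]]]]]]; apply: AB_C. Qed.

Section FirstMixedSwap.
Variable ts : nat.
Hypotheses (lt_tsN : ts < N) (ts_lo : swap_lo Pi ts \in A :|: B) (ts_hi : swap_hi Pi ts \in C).
Hypothesis ts_first :
  forall s, s < ts -> ~~ ((swap_lo Pi s \in A :|: B) && (swap_hi Pi s \in C)).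

Lemma AB_swap_before_first s : s < N -> swap_lo Pi s \in A -> swap_hi Pi s \in B -> s < ts.
Proof.
move=> lt_sN lo_s hi_s; apply: (AB_before_mixed lt_sN lt_tsN).
  exists (swap_lo Pi s), (swap_hi Pi s).
  by split; [exact: (swaps_swap_lo_hi Pi_half lt_sN) | left; split].
exists (swap_lo Pi ts), (swap_hi Pi ts).
by split; [exact: (swaps_swap_lo_hi Pi_half lt_tsN) | right; split].
Qed.

Lemma pos_first_AB_C x y : x \in A :|: B -> y \in C -> pos ts x < pos ts y.
Proof.
move=> xAB yC; have lt0_xy : pos 0 x < pos 0 y.
  by move: xAB yC; rewrite in_setU memA memB memC; lia.
rewrite ltnNge leq_eqVlt negb_or; apply/andP; split.
  by apply: contraTneq lt0_xy => /val_inj/perm_inj ->; rewrite ltnn.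
apply/negP => /(pos_inverted Pi_half lt0_xy (ltnW lt_tsN)) [s lt_sts [lo_s hi_s]].
by have := ts_first lt_sts; rewrite lo_s hi_s xAB yC.
Qed.

Lemma pos_first_B_A x y : x \in B -> y \in A -> pos ts x < pos ts y.
Proof.
move=> xB yA; have lt0_yx : pos 0 y < pos 0 x by move: xB yA; rewrite memA memB; lia.
apply/(pos_inverted Pi_half lt0_yx (ltnW lt_tsN)).
have [s lt_sN swap_s] := exists_swap Pi_half lt0_yx.
by exists s => //; case: swap_s => lo_s hi_s; apply: AB_swap_before_first; rewrite ?lo_s ?hi_s.
Qed.

(* Every AB-swap happens before ts and no element of C has passed A ∪ B yet, so at
   time ts the classes appear in the order B, A, C. *)
Lemma mem_A_first x : (x \in A) = (10 <= pos ts x < 20).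
Proof.
have classes y : [|| y \in A, y \in B | y \in C] by rewrite memA memB memC; lia.
have disjAB y : y \in A -> y \notin B by rewrite memA memB; lia.
have cardB : #|B| = 10 by rewrite (card_pos (Q := fun p => 10 <= p < 20) memB) unlock.
have cardAB : #|A :|: B| = 20.
  have memAB y : (y \in A :|: B) = (pos 0 y < 20) by rewrite in_setU memA memB; lia.
  by rewrite (card_pos (Q := fun p => p < 20) memAB) unlock.
have B_first y z : y \in B -> z \notin B -> pos ts y < pos ts z.
  move=> yB zNB; have := classes z; rewrite (negbTE zNB) /= => /orP [zA | zC].
    exact: pos_first_B_A.
  by apply: pos_first_AB_C; rewrite // in_setU yB orbT.
have AB_first y z : y \in A :|: B -> z \notin A :|: B -> pos ts y < pos ts z.
  move=> yAB; rewrite in_setU negb_or => /andP [zNA zNB]; apply: pos_first_AB_C => //.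
  by have := classes z; rewrite (negbTE zNA) (negbTE zNB).
have -> : (x \in A) = (x \in A :|: B) && (x \notin B).
  rewrite in_setU; case xA: (x \in A); first by rewrite (disjAB _ xA).
  by rewrite /= andbN.
rewrite -(perm_prefix_block AB_first) -(perm_prefix_block B_first) cardB cardAB.
by rewrite -leqNgt andbC.
Qed.

Lemma mid_swaps_AB : mid_swaps A B = 5.
Proof.
have := left_count_telescope Pi_half A 15 (ltnW lt_tsN).
rewrite (left_count_pos (Q := fun p => p < 10) 15 memA).
rewrite (left_count_pos (Q := fun p => 10 <= p < 20) 15 mem_A_first).
have -> : \sum_(0 <= p < 30) (p < 10) && (p < 15) = 10 by rewrite unlock.
have -> : \sum_(0 <= p < 30) (10 <= p < 20) && (p < 15) = 5 by rewrite unlock.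
have -> : \sum_(0 <= s < ts) (crosses Pi 15 s && (swap_lo Pi s \in A)) =
          \sum_(0 <= s < ts) (crosses Pi 15 s && (swap_hi Pi s \in A)) +
          \sum_(0 <= s < ts) [&& crosses Pi 15 s, swap_lo Pi s \in A & swap_hi Pi s \in B].
  rewrite -big_split; apply: eq_big_nat => s /andP [_ lt_sts].
  have lt_sN := ltn_trans lt_sts lt_tsN.
  have := ts_first lt_sts; have := swap_lo_before_hi Pi_half lt_sN.
  by rewrite in_setU !memA !memB !memC; case: (crosses _ _ _) => /=; lia.
have late_AB : \sum_(ts <= s < N)
    [&& crosses Pi 15 s, swap_lo Pi s \in A & swap_hi Pi s \in B] = 0.
  rewrite big_nat big1 // => s /andP [le_tss lt_sN].
  apply/eqP; rewrite eqb0; apply/negP => /and3P [_ lo_s hi_s].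
  by have := AB_swap_before_first lt_sN lo_s hi_s; rewrite ltnNge le_tss.
rewrite /mid_swaps (big_cat_nat (leq0n ts) (ltnW lt_tsN)) /= late_AB; lia.
Qed.

End FirstMixedSwap.

Lemma mid_swaps_AC_BC : mid_swaps A C + mid_swaps B C = 10.
Proof.
have memC_rev x : (x \in C) = (20 <= 29 - pos N x).
  by rewrite memC pos_rev //=; have := ltn_ord (pos 0 x); lia.
have := left_count_telescope Pi_half C 15 (leqnn N).
rewrite (left_count_pos (Q := fun p => 20 <= p) 15 memC).
rewrite (left_count_pos (Q := fun p => 20 <= 29 - p) 15 memC_rev).
have -> : \sum_(0 <= p < 30) (20 <= p) && (p < 15) = 0 by rewrite unlock.
have -> : \sum_(0 <= p < 30) (20 <= 29 - p) && (p < 15) = 10 by rewrite unlock.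
have -> : \sum_(0 <= s < N) (crosses Pi 15 s && (swap_hi Pi s \in C)) =
          \sum_(0 <= s < N) (crosses Pi 15 s && (swap_lo Pi s \in C)) +
          mid_swaps A C + mid_swaps B C.
  rewrite /mid_swaps -!big_split; apply: eq_big_nat => s /andP [_ lt_sN].
  have := swap_lo_before_hi Pi_half lt_sN.
  by rewrite !memA !memB !memC; case: (crosses _ _ _) => /=; lia.
lia.
Qed.

End ThreeDecomposable30.

Theorem lemma1 (Pi : nat -> {perm 'I_30}) (A B C : {set 'I_30}) :
  three_decomposable Pi A B C -> N_bi 15 Pi A B C = 15.
Proof.
move=> Pi_decomp; have [ts lt_tsN [ts_lo ts_hi ts_first]] := first_mixed_swap Pi_decomp.
rewrite N_bi_classes // -addnA mid_swaps_AC_BC //.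
by rewrite (mid_swaps_AB Pi_decomp lt_tsN ts_lo ts_hi ts_first).
Qed.
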